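(* Let the data $A^\pm$, $C$, $\mu^\pm$ satisfy the standing assumptions below and let $x\in S\cap\mathbb{R}^n$. Then $x$ is a local optimum if and only if, for every $\mathcal{H}\in\mathfrak{G}(x)$, the minimum capacity of an $s$-$t$ cut in $\mathcal{H}$ equals $D$. Moreover, if $x$ is not a local optimum, then for some $\mathcal{H}\in\mathfrak{G}(x)$ there is a minimum $s$-$t$ cut $(X,Y)$ ($s\in X$, $t\in Y$) with capacity less than $D$, and $J=Y\cap[n]$ is a feasible descent direction at $x$, i.e. $x+\delta\chi_J\in S$ and $f(x+\delta\chi_J)<f(x)$ for all $0<\delta<\epsilon(x)$.
   Context: $\mathbb{R}_{\max}=\mathbb{R}\cup\{-\infty\}$, $[n]=\{1,\dots,n\}$, $\chi_J$ is the indicator vector of $J$. Data: $A^\pm=(a^\pm_{i,j})\in\mathbb{R}_{\max}^{m\times n}$, $C=(c_{k,j})\in\mathbb{R}_{\max}^{p\times n}$, $\mu^+\in\mathbb{Z}_{\ge0}^p$, $\mu^-\in\mathbb{Z}_{\ge0}^n$; $A=(a_{i,j})$ with $a_{i,j}=\max(a^+_{i,j},a^-_{i,j})$. Objective $f(x)=\sum_k\mu^+_k\max_j(c_{k,j}+x_j)-\sum_j\mu^-_jx_j$; feasible set $S=\{x:\max_j(a^+_{i,j}+x_j)\ge\max_j(a^-_{i,j}+x_j)\ \forall i\in[m]\}$. Standing assumptions: every row of $A$ and of $C$ has a finite entry; $\sum_k\mu^+_k=\sum_j\mu^-_j=:D$; the undirected graph on $\{u_1,\dots,u_p\}\cup[n]\cup\{w_1,\dots,w_m\}$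 with edges $\{u_k,j\}$ ($c_{k,j}\ne-\infty$) and $\{w_i,j\}$ ($a_{i,j}\ne-\infty$) is connected. A point $x\in S\cap\mathbb{R}^n$ is a local optimum if there is $\delta>0$ with $f(y)\ge f(x)$ for all $y\in S\cap\mathbb{R}^n$ with $\max_j|x_j-y_j|<\delta$. Let $\epsilon(x)$ be the smallest positive value among the numbers $|(a_{i,j_1}+x_{j_1})-(a_{i,j_2}+x_{j_2})|$ and $|(c_{k,j_1}+x_{j_1})-(c_{k,j_2}+x_{j_2})|$ over $i,k,j_1,j_2$. Tangent digraph $\mathcal{G}(x)$: vertices $U=\{u_1,\dots,u_p\}$, $V=[n]$, $W=\{w_1,\dots,w_m\}$; edges $E_1(x)=\{(u_k,j):\max_{j'}(c_{k,j'}+x_{j'})=c_{k,j}+x_j\}$, $E_2(x)=\{(w_i,j):\max_{j'}(a_{i,j'}+x_{j'})=a^-_{i,j}+x_j\}$, $E_3(x)=\{(j,w_i):\max_{j'}(a_{i,j'}+x_{j'})=a^+_{i,j}+x_j\}$. The extended digraph $\overline{\mathcal{G}}(x)$ adds vertices $s,t$ and edges $(s,u_k)$ of capacity $\mu^+_k$ ($k\in[p]$) and $(j,t)$ of capacity $\mu^-_j$ ($j\in[n]$); every edge of $E_1(x)\cup E_2(x)\cup E_3(x)$ has capacity $D$. $\mathfrak{G}(x)$ is the set of subgraphs of $\overline{\mathcal{G}}(x)$ obtained by deleting edges of $E_3(x)$ so that each $w_i$ has exactly one incoming edge. The capacity of an $s$-$t$ cut $(X,Y)$ is the total capacity of edges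 from $X$ to $Y$. *)

(* R : realType (mathcomp-analysis reals).
   The tropical semiring R_max = R u {-oo} is modelled by [option R],
   with [None] standing for -oo. *)
From HB Require Import structures.
From mathcomp Require Import all_boot all_order all_algebra.
From mathcomp Require Import reals.
Set Implicit Arguments.
Unset Strict Implicit.
Unset Printing Implicit Defensive.
Import Order.TTheory GRing.Theory Num.Theory.
Local Open Scope ring_scope.

Section TropicalLP.
Variable R : realType.

Definition addo (a : option R) (y : R) : option R := omap (fun r => r + y) a.

Definition maxo (a b : option R) : option R :=
  match a, b with
  | None, _ => b
  | _, None => a
  | Some r, Some s => Some (Num.max r s)
  end.

Definition leo (a b : option R) : bool :=
  match a, b with
  | None, _ => true
  | Some _, None => false
  | Some r, Some s => r <= s
  end.

Variables (m n p : nat).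

Definition rowmax (a : 'I_n -> option R) (x : 'I_n -> R) : option R :=
  \big[maxo/None]_(j < n) addo (a j) (x j).

Variables (Ap Am : 'I_m -> 'I_n -> option R) (C : 'I_p -> 'I_n -> option R)
          (mup : 'I_p -> nat) (mum : 'I_n -> nat).

Definition Amat (i : 'I_m) (j : 'I_n) : option R := maxo (Ap i j) (Am i j).

Definition Dtot : nat := (\sum_(k < p) mup k)%N.

(* objective; under the standing assumption each row max of C is finite,
   so [odflt 0] never uses its default *)
Definition fobj (x : 'I_n -> R) : R :=
  \sum_(k < p) (mup k)%:R * odflt 0 (rowmax (C k) x)
  - \sum_(j < n) (mum j)%:R * x j.

Definition feasible (x : 'I_n -> R) : Prop :=
  forall i : 'I_m, leo (rowmax (Am i) x) (rowmax (Ap i) x).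

Definition local_optimum (x : 'I_n -> R) : Prop :=
  feasible x /\
  exists delta : R, 0 < delta /\
    forall y : 'I_n -> R, feasible y ->
      (forall j, `|x j - y j| < delta) -> fobj x <= fobj y.

(* 0 < delta < eps(x), where eps(x) is the smallest positive value among
   the |(a_{i,j1}+x_{j1}) - (a_{i,j2}+x_{j2})| and
   |(c_{k,j1}+x_{j1}) - (c_{k,j2}+x_{j2})| (finite entries); if there is
   no positive such value, eps(x) = +oo. *)
Definition below_eps (x : 'I_n -> R) (delta : R) : Prop :=
  0 < delta /\
  (forall (i : 'I_m) (j1 j2 : 'I_n) (r1 r2 : R),
      Amat i j1 = Some r1 -> Amat i j2 = Some r2 ->
      0 < `|(r1 + x j1) - (r2 + x j2)| -> delta < `|(r1 + x j1) - (r2 + x j2)|) /\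
  (forall (k : 'I_p) (j1 j2 : 'I_n) (r1 r2 : R),
      C k j1 = Some r1 -> C k j2 = Some r2 ->
      0 < `|(r1 + x j1) - (r2 + x j2)| -> delta < `|(r1 + x j1) - (r2 + x j2)|).

(* undirected bipartite-type graph on U u [n] u W, vertices encoded as
   inl (inl k) = u_k, inl (inr j) = j, inr i = w_i *)
Definition uvert : finType := ('I_p + 'I_n + 'I_m)%type.

Definition uedge (a b : uvert) : bool :=
  match a, b with
  | inl (inl k), inl (inr j) => C k j != None
  | inl (inr j), inl (inl k) => C k j != None
  | inr i, inl (inr j) => Amat i j != None
  | inl (inr j), inr i => Amat i j != None
  | _, _ => false
  end.

Definition standing_assumptions : Prop :=
  (forall i : 'I_m, exists j : 'I_n, Amat i j != None) /\
  (forall k : 'I_p, exists j : 'I_n, C k j != None) /\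
  (\sum_(k < p) mup k = \sum_(j < n) mum j)%N /\
  (forall a b : uvert, connect uedge a b).

Definition E1 (x : 'I_n -> R) (k : 'I_p) (j : 'I_n) : bool :=
  rowmax (C k) x == addo (C k j) (x j).
Definition E2 (x : 'I_n -> R) (i : 'I_m) (j : 'I_n) : bool :=
  rowmax (Amat i) x == addo (Am i j) (x j).
Definition E3 (x : 'I_n -> R) (j : 'I_n) (i : 'I_m) : bool :=
  rowmax (Amat i) x == addo (Ap i j) (x j).

(* vertices of the extended digraph:
   inl true = s, inl false = t, inr (inl (inl k)) = u_k,
   inr (inl (inr j)) = j, inr (inr i) = w_i *)
Definition vert : finType := (bool + ('I_p + 'I_n + 'I_m))%type.
Definition vs : vert := inl true.
Definition vt : vert := inl false.

(* A member H of frak G(x) is given by the set K of retained E3 edges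
   (j, w_i): K is a subset of E3(x) and each w_i has exactly one
   incoming edge (all incoming edges of w_i are E3 edges). *)
Definition in_frakG (x : 'I_n -> R) (K : {set 'I_n * 'I_m}) : Prop :=
  (forall e, e \in K -> E3 x e.1 e.2) /\
  (forall i : 'I_m, #|[set j : 'I_n | (j, i) \in K]| = 1%N).

Definition capH (x : 'I_n -> R) (K : {set 'I_n * 'I_m}) (u v : vert) : nat :=
  match u, v with
  | inl true, inr (inl (inl k)) => mup k
  | inr (inl (inr j)), inl false => mum j
  | inr (inl (inl k)), inr (inl (inr j)) => if E1 x k j then Dtot else 0%N
  | inr (inr i), inr (inl (inr j)) => if E2 x i j then Dtot else 0%N
  | inr (inl (inr j)), inr (inr i) => if (j, i) \in K then Dtot else 0%N
  | _, _ => 0%N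
  end.

Definition is_cut (X : {set vert}) : bool := (vs \in X) && (vt \notin X).

Definition cutcap (x : 'I_n -> R) (K : {set 'I_n * 'I_m}) (X : {set vert}) : nat :=
  (\sum_(u in X) \sum_(v in ~: X) capH x K u v)%N.

Lemma is_cut_s : is_cut [set vs].
Proof. by rewrite /is_cut !inE eqxx. Qed.

Definition mincut (x : 'I_n -> R) (K : {set 'I_n * 'I_m}) : nat :=
  cutcap x K [arg min_(X < [set vs] | is_cut X) cutcap x K X].

Definition is_min_cut (x : 'I_n -> R) (K : {set 'I_n * 'I_m}) (X : {set vert}) : Prop :=
  is_cut X /\ forall Y, is_cut Y -> (cutcap x K X <= cutcap x K Y)%N.

Definition Jof (X : {set vert}) : {set 'I_n} := [set j | inr (inl (inr j)) \notin X].

Definition shift (x : 'I_n -> R) (J : {set 'I_n}) (delta : R) : 'I_n -> R :=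
  fun j => x j + (if j \in J then delta else 0).

End TropicalLP.

(* Near a feasible x everything is governed by tangent data.  If the
   oscillation of d = y - x stays below the gap eps(x), then f(y) - f(x) equals
   g(d) = sum_k mu+_k max_{(u_k,j) in E1} d_j - sum_j mu-_j d_j, and y is feasible
   iff every d_j with (w_i,j) in E2 is dominated by some d_j' with (j',w_i) in E3.
   Truncations of d by nondecreasing maps keep this tangent feasibility, and g is
   additive on the decomposition d = min(d,t) + (max(d,t) - t); peeling off level
   sets therefore turns any tangent descent direction into an indicator chi_J.
   Finally, 0/1 tangent descent directions are the same as s-t cuts of capacity
   < D in some H in frak G(x): infinite (= D) capacities forbid cutting E1, E2 and
   the retained E3 edges, and the finite part of such a cut is at least D + g(chi_J),
   with equality for the cut built from J. *)

From HB Require Import structures.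
From mathcomp Require Import all_boot all_order all_algebra.
From mathcomp Require Import boolp reals lra zify.
Set Implicit Arguments.
Unset Strict Implicit.
Unset Printing Implicit Defensive.
Import Order.TTheory GRing.Theory Num.Theory.
Local Open Scope ring_scope.

Section TropicalMax.
Variable R : realType.
Implicit Types (a b c : option R) (y : R).

Lemma maxoA : associative (@maxo R).
Proof. by move=> [r|] [s|] [t|] //=; rewrite maxA. Qed.

Lemma maxoC : commutative (@maxo R).
Proof. by move=> [r|] [s|] //=; rewrite maxC. Qed.

Lemma maxNo : left_id None (@maxo R).
Proof. by case. Qed.

HB.instance Definition _ := Monoid.isComLaw.Build (option R) None (@maxo R)
  maxoA maxoC maxNo.

Lemma leo_refl a : leo a a.
Proof. by case: a => //= r. Qed.

Lemma leo_trans b a c : leo a b -> leo b c -> leo a c.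
Proof. case: a b c => [r|] [s|] [t|] //=; exact: le_trans. Qed.

Lemma leo_anti a b : leo a b -> leo b a -> a = b.
Proof. by case: a b => [r|] [s|] //= rs sr; rewrite (@le_anti _ _ r s) ?rs. Qed.

Lemma leo_maxo a b c : leo (maxo a b) c = leo a c && leo b c.
Proof. by case: a b c => [r|] [s|] [t|] //=; rewrite ?andbT // ge_max. Qed.

Lemma maxo_idPl a b : leo b a -> maxo a b = a.
Proof. by case: a b => [r|] [s|] //= sr; rewrite max_l. Qed.

Lemma maxo_eq a b c : leo a c -> leo b c -> (maxo a b == c) = (a == c) || (b == c).
Proof.
case: a b c => [r|] [s|] [t|] //= rt st; rewrite ?orbF ?orbb //.
rewrite !(inj_eq Some_inj) eq_le [_ <= t]ge_max rt st /=.
by rewrite !eq_le rt st /= le_max.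
Qed.

Lemma addo_maxo a b y : addo (maxo a b) y = maxo (addo a y) (addo b y).
Proof. by case: a b => [r|] [s|] //=; rewrite addr_maxl. Qed.

Lemma leo_maxol a b : leo a (maxo a b).
Proof. by have := leo_refl (maxo a b); rewrite leo_maxo => /andP[]. Qed.

End TropicalMax.

Section RowMax.
Variables (R : realType) (n : nat).
Implicit Types (a : 'I_n -> option R) (x d e : 'I_n -> R) (P : pred 'I_n).

Lemma rowmax_ub a x j : leo (addo (a j) (x j)) (rowmax a x).
Proof. by rewrite /rowmax (bigD1 j) //= leo_maxol. Qed.

Lemma rowmax_le a x c : (forall j, leo (addo (a j) (x j)) c) -> leo (rowmax a x) c.
Proof.
by move=> le_c; rewrite /rowmax; elim/big_rec: _ => // j u _ le_u; rewrite leo_maxo le_c.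
Qed.

Lemma rowmax_attained a x : rowmax a x != None ->
  exists j, rowmax a x = addo (a j) (x j).
Proof.
rewrite /rowmax; elim/big_ind: _ => // [u v IHu IHv|j _ _]; last by exists j.
by case: u v IHu IHv => [r|] [s|] //= IHu IHv _; rewrite /Num.max;
  case: ifP => _; [apply: IHv | apply: IHu].
Qed.

Lemma rowmax_Some a x j r : a j = Some r -> exists M, rowmax a x = Some M.
Proof.
by move=> ajr; have := rowmax_ub a x j; rewrite ajr; case: rowmax => // M; exists M.
Qed.

Lemma rowmax_fin a x : (exists j, a j != None) -> exists M, rowmax a x = Some M.
Proof. by case=> j; case aj: (a j) => [r|] // _; apply: rowmax_Some aj. Qed.

Lemma rowmax_maxo a a' x :
  rowmax (fun j => maxo (a j) (a' j)) x = maxo (rowmax a x) (rowmax a' x).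
Proof. by rewrite /rowmax -big_split; apply: eq_bigr => j _; rewrite addo_maxo. Qed.

(** The maximum of [d] over [P]; the value [0] for an empty [P] is junk. *)
Definition maxon P d : R := odflt 0 (rowmax (fun j => if P j then Some 0 else None) d).

Lemma maxon_ub P d j : P j -> d j <= maxon P d.
Proof.
move=> Pj; have := rowmax_ub (fun j => if P j then Some 0 else None) d j.
by rewrite Pj /maxon /= add0r; case: rowmax.
Qed.

Lemma maxon_attained P d j0 : P j0 -> exists2 j, P j & maxon P d = d j.
Proof.
move=> Pj0; pose a j := if P j then Some (0 : R) else None.
have [M aM] : exists M, rowmax a d = Some M.
  by apply: (@rowmax_Some _ _ j0 0); rewrite /a Pj0.
have [j] : exists j, rowmax a d = addo (a j) (d j) by apply: rowmax_attained; rewrite aM.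
rewrite /maxon -/a aM /a; case Pj: (P j) => //= -[->].
by exists j; rewrite ?add0r.
Qed.

Lemma maxon_eq P d v : (forall j, P j -> d j <= v) -> (exists2 j, P j & d j = v) ->
  maxon P d = v.
Proof.
move=> le_v [j Pj vE]; subst v; have [j' Pj' e] := maxon_attained d Pj.
by apply/le_anti; rewrite e le_v //= -e maxon_ub.
Qed.

Lemma eq_maxon P d e : d =1 e -> maxon P d = maxon P e.
Proof. by move=> de; rewrite /maxon /rowmax; under eq_bigr do rewrite de. Qed.

Lemma maxon_comp P (phi : R -> R) d : {homo phi : u v / u <= v} ->
  (exists j, P j) -> maxon P (phi \o d) = phi (maxon P d).
Proof.
move=> phi_mono [j0 Pj0]; have [j Pj e] := maxon_attained d Pj0.
apply: maxon_eq => [i Pi|]; last by exists j => //; rewrite e.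
exact/phi_mono/maxon_ub.
Qed.

End RowMax.

Section TangentCone.
Variables (R : realType) (n p m : nat).
Variables (S : 'I_p -> pred 'I_n) (T2 T3 : 'I_m -> 'I_n -> bool).
Variables (a : 'I_p -> R) (b : 'I_n -> R).
Implicit Types (d e : 'I_n -> R) (J : {set 'I_n}).

Definition chi J j : R := (j \in J)%:R.

Definition tangent_obj d := \sum_k a k * maxon (S k) d - \sum_j b j * d j.

Definition tangent_feasible d := forall i j, T2 i j -> exists2 j', T3 i j' & d j <= d j'.

Lemma tangent_feasible_mono d e : (forall j j', d j <= d j' -> e j <= e j') ->
  tangent_feasible d -> tangent_feasible e.
Proof. by move=> de fd i j /fd[j' ? ?]; exists j'; last exact: de. Qed.

Lemma tangent_feasible_superlevel d t : tangent_feasible d ->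
  tangent_feasible (chi [set j | t <= d j]).
Proof.
apply: tangent_feasible_mono => j j' le_jj'; rewrite /chi !inE ler_nat.
by case: (leP t (d j)) => // /le_trans->.
Qed.

Lemma eq_tangent_obj d e : d =1 e -> tangent_obj d = tangent_obj e.
Proof.
move=> de; congr (_ - _); apply: eq_bigr => i _; first by rewrite (eq_maxon _ de).
by rewrite de.
Qed.

Hypothesis S_nonempty : forall k, exists j, S k j.
Hypothesis weights_balanced : \sum_k a k = \sum_j b j.

Lemma tangent_obj_comp (phi : R -> R) d : {homo phi : u v / u <= v} ->
  tangent_obj (phi \o d) = \sum_k a k * phi (maxon (S k) d) - \sum_j b j * phi (d j).
Proof. by move=> phi_mono; rewrite /tangent_obj; under eq_bigr do rewrite maxon_comp //.
Qed.

Lemma tangent_obj_const c : tangent_obj (fun _ => c) = 0.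
Proof.
rewrite -[fun _ => c]/((fun _ => c) \o (fun _ : 'I_n => c)) tangent_obj_comp //.
by rewrite -!mulr_suml weights_balanced subrr.
Qed.

Lemma tangent_obj_eq0 d : (forall j j', d j = d j') -> tangent_obj d = 0.
Proof.
move=> dc; have [j0 _|none] := pickP (@predT 'I_n).
  by rewrite (eq_tangent_obj (e := fun _ => d j0)) ?tangent_obj_const.
by rewrite (eq_tangent_obj (e := fun _ => 0)) ?tangent_obj_const // => j; have := none j.
Qed.

Lemma tangent_objZ c d : 0 <= c -> tangent_obj (fun j => c * d j) = c * tangent_obj d.
Proof.
move=> c_ge0; rewrite -[fun j => _]/(( *%R c) \o d) tangent_obj_comp; last first.
  by move=> u v; exact: ler_wpM2l.
by rewrite mulrBr !mulr_sumr; congr (_ - _); apply: eq_bigr => i _; rewrite mulrCA.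
Qed.

(** Both summands are nondecreasing functions of [d], so their maxima over
    any set add up as well. *)
Lemma tangent_obj_split t d : tangent_obj d =
  tangent_obj (fun j => Num.min (d j) t) + tangent_obj (fun j => Num.max (d j) t - t).
Proof.
rewrite -[fun j => Num.min _ _]/((Num.min^~ t) \o d).
rewrite -[fun j => Num.max _ _ - _]/((fun u => Num.max u t - t) \o d).
rewrite !tangent_obj_comp => [|u v uv|u v uv]; last 2 first.
- by rewrite lerD2r le_max2.
- by rewrite le_min2.
rewrite addrACA -opprD -!big_split /=.
by congr (_ - _); apply: eq_bigr => i _; rewrite -mulrDr addrA addr_min_max addrK.
Qed.

Definition nonmax d : {set 'I_n} := [set j | [exists j', d j < d j']].

Lemma nonmax_min_proper d j0 : j0 \in nonmax d ->
  nonmax (fun j => Num.min (d j) (d j0)) \proper nonmax d.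
Proof.
rewrite !inE => /existsP[j1 lt01]; apply/properP; split.
  apply/subsetP => j; rewrite !inE => /existsP[j' ltj'].
  apply/existsP; exists j1; apply: le_lt_trans lt01.
  by move: ltj'; rewrite lt_min => /andP[_]; rewrite gt_min ltxx orbF => /ltW.
exists j0; first by rewrite inE; apply/existsP; exists j1.
by rewrite inE negb_exists; apply/forallP => j; rewrite minxx -leNgt ge_min lexx orbT.
Qed.

(** Split [d] at its second largest value [w']: the upper part is a positive
    multiple of the indicator of the top level set, and the lower part has
    fewer non-maximal entries. *)
Lemma tangent_descent_indicator d : tangent_feasible d -> tangent_obj d < 0 ->
  exists J, tangent_feasible (chi J) /\ tangent_obj (chi J) < 0.
Proof.
have [N] := ubnP #|nonmax d|; elim: N d => // N IH d ltN fd obj_lt0.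
have [nm0|[j1 j1_nm]] := set_0Vmem (nonmax d).
  suff obj0 : tangent_obj d = 0 by move: obj_lt0; rewrite obj0 ltxx.
  have ge k k' : d k' <= d k.
    rewrite leNgt; apply/negP => lt.
    have : k \in nonmax d by rewrite inE; apply/existsP; exists k'.
    by rewrite nm0 inE.
  by apply: tangent_obj_eq0 => j j'; apply/le_anti; rewrite !ge.
pose w := maxon predT d; pose w' := maxon [pred j | d j < w] d.
have le_w j : d j <= w by apply: maxon_ub.
have lt_w1 : d j1 < w.
  by move: j1_nm; rewrite inE => /existsP[j' /lt_le_trans->].
have [j2 lt_w2 w'E] := maxon_attained d (lt_w1 : [pred j | d j < w] j1).
have le_w' j : d j < w -> d j <= w' by move=> ?; apply: maxon_ub.
have lt_w'w : w' < w by rewrite /w' w'E.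
pose J := [set j | w <= d j].
have top : tangent_obj (fun j => Num.max (d j) w' - w') = (w - w') * tangent_obj (chi J).
  rewrite -tangent_objZ ?subr_ge0 ?ltW //; apply: eq_tangent_obj => j.
  rewrite /chi inE; case: leP => [le_wd | /le_w' le_dw'].
    by rewrite mulr1 (@le_anti _ _ (d j) w) ?le_wd ?le_w // max_l // ltW.
  by rewrite mulr0 max_r // subrr.
have [obj_J_lt0|obj_J_ge0] := ltP (tangent_obj (chi J)) 0.
  by exists J; split => //; apply: tangent_feasible_superlevel.
apply: (IH (fun j => Num.min (d j) w')).
- have [jt _ wE] := maxon_attained d (isT : predT j1).
  rewrite /w' w'E; apply: leq_trans (proper_card (nonmax_min_proper _)) ltN.
  by rewrite inE; apply/existsP; exists jt; rewrite -wE.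
- by apply: tangent_feasible_mono fd => j j' ?; rewrite le_min2.
- move: obj_lt0; rewrite (tangent_obj_split w') top.
  have : 0 <= (w - w') * tangent_obj (chi J) by rewrite mulr_ge0 // subr_ge0 ltW.
  lra.
Qed.

Lemma tangent_obj_chi J : tangent_obj (chi J) =
  \sum_(k | [exists j, S k j && (j \in J)]) a k - \sum_(j in J) b j.
Proof.
have maxS k : maxon (S k) (chi J) = [exists j, S k j && (j \in J)]%:R.
  case: existsP => [[j /andP[Sj jJ]] | none].
    by apply: maxon_eq => [i _|]; [rewrite /chi lern1 leq_b1 | exists j; rewrite /chi ?jJ].
  have chi0 i : S k i -> chi J i = 0.
    by rewrite /chi; case: (boolP (i \in J)) => // iJ Si; case: none; exists i; rewrite Si.
  apply: maxon_eq => [i /chi0->//|].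
  by have [j Sj] := S_nonempty k; exists j; rewrite ?chi0.
rewrite /tangent_obj; congr (_ - _); rewrite [RHS]big_mkcond; apply: eq_bigr => i _.
  by rewrite maxS; case: ifP; rewrite ?mulr1 ?mulr0.
by rewrite /chi; case: (i \in J); rewrite ?mulr1 ?mulr0.
Qed.

End TangentCone.
Arguments chi {R n} J j.

Section RowGap.
Variables (R : realType) (n : nat).
Implicit Types (a : 'I_n -> option R) (x : 'I_n -> R) (delta : R).

(** [below_eps x delta] is [0 < delta] together with [row_gap] for every row
    of [A] and of [C]. *)
Definition row_gap a x delta := forall j1 j2 r1 r2, a j1 = Some r1 -> a j2 = Some r2 ->
  0 < `|(r1 + x j1) - (r2 + x j2)| -> delta < `|(r1 + x j1) - (r2 + x j2)|.

Definition rowarg a x : pred 'I_n := fun j => rowmax a x == addo (a j) (x j).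

Lemma eq_addo (u : option R) z M : (Some M == addo u z) = (u == Some (M - z)).
Proof. by case: u => [r|] //=; rewrite !(inj_eq Some_inj) [RHS]eq_sym subr_eq. Qed.

Variables (a : 'I_n -> option R) (x y : 'I_n -> R) (delta M : R).
Hypotheses (gap : row_gap a x delta) (aM : rowmax a x = Some M).
Hypothesis small : forall j1 j2, (y j1 - x j1) - (y j2 - x j2) <= delta.

Local Notation dev := (fun j => y j - x j).

Lemma rowarg_nonempty : exists j, rowarg a x j.
Proof.
have [j aj] : exists j, rowmax a x = addo (a j) (x j) by apply: rowmax_attained; rewrite aM.
by exists j; rewrite /rowarg aj.
Qed.

Lemma rowargE j r : a j = Some r -> rowarg a x j = (r + x j == M).
Proof. by move=> ajr; rewrite /rowarg aM eq_addo ajr (inj_eq Some_inj) eq_sym subr_eq. Qed.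

Lemma rowmax_gap_lt j r : a j = Some r -> r + x j != M ->
  r + y j < M + maxon (rowarg a x) dev.
Proof.
move=> ajr neM; have [j0 arg0] := rowarg_nonempty.
have aj0 : a j0 = Some (M - x j0) by apply/eqP; rewrite -eq_addo -aM.
have := rowmax_ub a x j; rewrite ajr aM /= => le_M.
have lt_M : r + x j < M by rewrite lt_neqAle neM.
have gap_j : delta < M - (r + x j).
  have := gap ajr aj0; rewrite subrK ltr0_norm ?subr_lt0 // opprB.
  by apply; rewrite subr_gt0.
by have /= := maxon_ub dev arg0; have := small j j0; lra.
Qed.

Lemma rowmax_local : rowmax a y = Some (M + maxon (rowarg a x) dev).
Proof.
apply: leo_anti.
  apply: rowmax_le => j; case ajr: (a j) => [r|] //=.
  have [argj|neM] := boolP (r + x j == M); last exact/ltW/rowmax_gap_lt.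
  have /= := maxon_ub dev (_ : rowarg a x j); rewrite (rowargE ajr) argj => /(_ isT).
  by move/eqP: argj; lra.
have [j0 arg0] := rowarg_nonempty; have [j argj ->] := maxon_attained dev arg0.
have ajM : a j = Some (M - x j) by apply/eqP; rewrite -eq_addo -aM.
by have := rowmax_ub a y j; rewrite ajM /= -addrA (addrC (- _)).
Qed.

End RowGap.

Section LocalAnalysis.
Variables (R : realType) (m n p : nat).
Variables (Ap Am : 'I_m -> 'I_n -> option R) (C : 'I_p -> 'I_n -> option R).
Variables (mup : 'I_p -> nat) (mum : 'I_n -> nat).
Implicit Types (x y : 'I_n -> R).

Local Notation tobj x :=
  (tangent_obj (R := R) (E1 C x) (fun k => (mup k)%:R) (fun j => (mum j)%:R)).
Local Notation tfeas x :=
  (tangent_feasible (R := R) (E2 Ap Am x) (fun i j => E3 Ap Am x j i)).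

Lemma feasibleE y :
  feasible Ap Am y <-> forall i, rowmax (Amat Ap Am i) y = rowmax (Ap i) y.
Proof.
split=> [fy i | Ay i]; first by rewrite rowmax_maxo maxo_idPl.
by rewrite -Ay rowmax_maxo maxoC leo_maxol.
Qed.

Lemma rowarg_Amat x i j : rowarg (Amat Ap Am i) x j = E2 Ap Am x i j || E3 Ap Am x j i.
Proof.
have := rowmax_ub (Amat Ap Am i) x j; rewrite /rowarg /E2 /E3 /Amat addo_maxo leo_maxo.
by case/andP=> lePx leMx; rewrite eq_sym maxo_eq // orbC !(eq_sym (rowmax _ _)).
Qed.

Variables (x : 'I_n -> R) (delta : R).
Hypotheses (A_fin : forall i, exists j, Amat Ap Am i j != None).
Hypotheses (C_fin : forall k, exists j, C k j != None).

Lemma E3_nonempty : feasible Ap Am x -> forall i, exists j, E3 Ap Am x j i.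
Proof.
move=> fx i; have [M AM] := rowmax_fin x (A_fin i).
have [j Aj] : exists j, rowmax (Ap i) x = addo (Ap i j) (x j).
  by apply: rowmax_attained; rewrite -(feasibleE x).1 // AM.
by exists j; rewrite /E3 (feasibleE x).1 // Aj.
Qed.

Hypothesis gap : below_eps Ap Am C x delta.

Variable y : 'I_n -> R.
Hypothesis small : forall j1 j2, (y j1 - x j1) - (y j2 - x j2) <= delta.
Local Notation dev := (fun j => y j - x j).

Lemma fobj_local : fobj C mup mum y = fobj C mup mum x + tobj x dev.
Proof.
have rowC k : odflt 0 (rowmax (C k) y) =
    odflt 0 (rowmax (C k) x) + maxon (E1 C x k) dev.
  have [M CM] := rowmax_fin x (C_fin k).
  by rewrite (rowmax_local (gap.2.2 k) CM small) CM.
have rowJ : \sum_j (mum j)%:R * y j =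
    \sum_j (mum j)%:R * x j + \sum_j (mum j)%:R * dev j.
  by rewrite -big_split; apply: eq_bigr => j _ /=; rewrite -mulrDr subrKC.
rewrite /fobj /tangent_obj rowJ; under eq_bigr do rewrite rowC mulrDr.
rewrite big_split /=; lra.
Qed.

Lemma feasible_local : tfeas x dev -> feasible Ap Am y.
Proof.
move=> tf i; have [M AM] := rowmax_fin x (A_fin i).
have [j0 arg0] := rowarg_nonempty AM; have [j argj mxE] := maxon_attained dev arg0.
have [j' E3j' le_jj'] : exists2 j', E3 Ap Am x j' i & dev j <= dev j'.
  by move: argj; rewrite rowarg_Amat => /orP[/tf | E3j]; last exists j.
have Apj' : Ap i j' = Some (M - x j') by apply/eqP; rewrite -eq_addo -AM.
apply: (@leo_trans _ (rowmax (Amat Ap Am i) y)).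
  by rewrite rowmax_maxo maxoC leo_maxol.
rewrite (rowmax_local (gap.2.1 i) AM small) mxE.
by apply: leo_trans (rowmax_ub _ _ j'); rewrite Apj' /=; lra.
Qed.

Lemma tangent_feasible_local : feasible Ap Am y -> tfeas x dev.
Proof.
move=> fy i j E2j; have [M AM] := rowmax_fin x (A_fin i).
have argj : rowarg (Amat Ap Am i) x j by rewrite rowarg_Amat E2j.
have [j0 arg0 mxE] := maxon_attained dev argj.
have yA : rowmax (Ap i) y = Some (M + dev j0).
  by rewrite -(feasibleE y).1 // (rowmax_local (gap.2.1 i) AM small) mxE.
have [j' Ap_att] : exists j', rowmax (Ap i) y = addo (Ap i j') (y j').
  by apply: rowmax_attained; rewrite yA.
case Apj': (Ap i j') Ap_att => [s|]; rewrite yA //= => -[sE].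
have : leo (Some s) (Amat Ap Am i j') by rewrite -Apj' leo_maxol.
case Aj': (Amat Ap Am i j') => [r|] //= le_sr.
have [eM|neM] := eqVneq (r + x j') M; last first.
  by have := rowmax_gap_lt (gap.2.1 i) AM small Aj' neM; rewrite mxE /=; lra.
have argj' : rowarg (Amat Ap Am i) x j' by rewrite (rowargE AM Aj') eM.
have /= := maxon_ub dev argj'; have /= := maxon_ub dev argj; rewrite mxE /= => le_j le_j'.
exists j'; last lra.
by rewrite /E3 AM eq_addo Apj'; apply/eqP; congr Some; lra.
Qed.

End LocalAnalysis.

Section Cuts.
Variables (R : realType) (m n p : nat).
Variables (Ap Am : 'I_m -> 'I_n -> option R) (C : 'I_p -> 'I_n -> option R).
Variables (mup : 'I_p -> nat) (mum : 'I_n -> nat) (x : 'I_n -> R) (K : {set 'I_n * 'I_m}).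

Local Notation vert := (vert m n p).
Local Notation uk k := (inr (inl (inl k)) : vert).
Local Notation jv j := (inr (inl (inr j)) : vert).
Local Notation wv i := (inr (inr i) : vert).
Local Notation cap := (capH Ap Am C mup mum x K).
Local Notation cutcap := (cutcap Ap Am C mup mum x K).

Lemma sum_vert (F : vert -> nat) : (\sum_v F v = F (vs m n p) + F (vt m n p)
  + \sum_k F (uk k) + \sum_j F (jv j) + \sum_i F (wv i))%N.
Proof. by rewrite big_sumType /= big_bool /= !big_sumType /= !addnA. Qed.

Lemma sum_if0 (I : finType) (P : pred I) : (\sum_(i : I) (if P i then 0 else 0) = 0)%N.
Proof. by rewrite big1 // => i; case: ifP. Qed.

Lemma cutcapE X : is_cut X -> cutcap X =
  (\sum_k (if uk k \in X then \sum_(j | jv j \notin X) cap (uk k) (jv j) else mup k)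
   + \sum_j (if jv j \in X then mum j + \sum_(i | wv i \notin X) cap (jv j) (wv i) else 0)
   + \sum_i (if wv i \in X then \sum_(j | jv j \notin X) cap (wv i) (jv j) else 0))%N.
Proof.
case/andP=> sX tX.
rewrite /cutcap; under eq_bigr => u _ do rewrite big_mkcond sum_vert.
rewrite big_mkcond sum_vert /= !sum_if0 !in_setC sX (negbTE tX) /= !add0n !addn0.
rewrite -big_split /=; congr (_ + _ + _)%N; apply: eq_bigr => u _;
  rewrite ?in_setC; case: (_ \in X) => /=; rewrite ?add0n ?addn0 // -big_mkcond;
  by under eq_bigl do rewrite in_setC.
Qed.

Definition cut_base (X : {set vert}) :=
  (\sum_(k | uk k \notin X) mup k + \sum_(j | jv j \in X) mum j)%N.

Lemma cut_base_le X : is_cut X -> (cut_base X <= cutcap X)%N.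
Proof.
move=> cX; rewrite cutcapE // /cut_base -addnA leq_add //.
  by rewrite big_mkcond; apply: leq_sum => k _; case: (_ \in X).
apply: leq_trans (leq_addr _ _); rewrite big_mkcond; apply: leq_sum => j _.
by case: (_ \in X) => //; apply: leq_addr.
Qed.

Lemma cutcap_ge_edge (X : {set vert}) u v :
  u \in X -> v \notin X -> (cap u v <= cutcap X)%N.
Proof.
move=> uX vX; rewrite /cutcap (bigD1 u) //= (bigD1 v) ?inE //= -addnA.
exact: leq_addr.
Qed.

Lemma cutcap_eq_base X : is_cut X ->
  (forall k j, uk k \in X -> jv j \notin X -> ~~ E1 C x k j) ->
  (forall j i, jv j \in X -> wv i \notin X -> (j, i) \notin K) ->
  (forall i j, wv i \in X -> jv j \notin X -> ~~ E2 Ap Am x i j) ->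
  cutcap X = cut_base X.
Proof.
move=> cX noE1 noK noE2; rewrite cutcapE // /cut_base [X in (_ + X)%N]big1 ?addn0.
  congr (_ + _)%N; rewrite [RHS]big_mkcond; apply: eq_bigr => u _;
    case: ifP => //= uX; rewrite big1 ?addn0 //.
    by move=> j jX; rewrite (negbTE (noE1 _ _ uX jX)).
  by move=> i iX; rewrite (negbTE (noK _ _ uX iX)).
move=> i _; case: ifP => // iX; rewrite big1 // => j jX.
by rewrite /= (negbTE (noE2 _ _ iX jX)).
Qed.

Lemma cutcap_source : cutcap [set vs m n p] = Dtot mup.
Proof.
rewrite cutcap_eq_base ?is_cut_s // => [|k j|j i|i j]; rewrite ?inE //.
rewrite /cut_base [X in (_ + X)%N]big_pred0 => [|j]; last by rewrite inE.
by rewrite addn0; apply: eq_bigl => k; rewrite inE.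
Qed.

Lemma mincutP :
  exists2 X, is_min_cut Ap Am C mup mum x K X & mincut Ap Am C mup mum x K = cutcap X.
Proof.
by rewrite /mincut; case: arg_minnP => [|X cX minX]; [exact: is_cut_s | exists X].
Qed.

End Cuts.

Section CutDirections.
Variables (R : realType) (m n p : nat).
Variables (Ap Am : 'I_m -> 'I_n -> option R) (C : 'I_p -> 'I_n -> option R).
Variables (mup : 'I_p -> nat) (mum : 'I_n -> nat) (x : 'I_n -> R).
Hypothesis balanced : Dtot mup = (\sum_j mum j)%N.

Local Notation vert := (vert m n p).
Local Notation uk k := (inr (inl (inl k)) : vert).
Local Notation jv j := (inr (inl (inr j)) : vert).
Local Notation wv i := (inr (inr i) : vert).
Local Notation cutcap := (cutcap Ap Am C mup mum x).
Local Notation D := (Dtot mup).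
Local Notation tobj :=
  (tangent_obj (R := R) (E1 C x) (fun k => (mup k)%:R) (fun j => (mum j)%:R)).
Local Notation tfeas :=
  (tangent_feasible (R := R) (E2 Ap Am x) (fun i j => E3 Ap Am x j i)).
Local Notation hits k J := [exists j, E1 C x k j && (j \in J)].

Hypothesis E1_nonempty : forall k, exists j, E1 C x k j.

Lemma tobj_chi_lt0 J :
  (tobj (chi J) < 0) = (\sum_(k | hits k J) mup k < \sum_(j in J) mum j)%N.
Proof. by rewrite tangent_obj_chi // -!natr_sum subr_lt0 ltr_nat. Qed.

Lemma small_cut_tangent_descent K X :
  in_frakG Ap Am x K -> is_cut X -> (cutcap K X < D)%N ->
  tfeas (chi (Jof X)) /\ tobj (chi (Jof X)) < 0.
Proof.
move=> [K_E3 K_one] cX small; set J := Jof X.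
have uncut u v : u \in X -> v \notin X -> (capH Ap Am C mup mum x K u v < D)%N.
  by move=> uX vX; apply: leq_ltn_trans small; apply: cutcap_ge_edge.
split.
  move=> i j E2j; have /eqP/cards1P[j0 Ki] := K_one i.
  have j0K : (j0, i) \in K.
    have : j0 \in [set j | (j, i) \in K] by rewrite Ki set11.
    by rewrite inE.
  exists j0; first exact: K_E3 j0K.
  rewrite /chi ler_nat !inE; case: (boolP (jv j \in X)) => //= jX.
  have wX : wv i \notin X.
    by apply/negP => wX; have := uncut _ _ wX jX; rewrite /= E2j ltnn.
  have j0X : jv j0 \notin X.
    by apply/negP => j0X; have := uncut _ _ j0X wX; rewrite /= j0K ltnn.
  by rewrite j0X.
rewrite tobj_chi_lt0.
have hits_cut k : hits k J -> uk k \notin X.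
  case/existsP=> j /andP[E1kj]; rewrite inE => jX.
  by apply/negP => kX; have := uncut _ _ kX jX; rewrite /= E1kj ltnn.
have le_hits : (\sum_(k | hits k J) mup k <= \sum_(k | uk k \notin X) mup k)%N.
  rewrite [leqLHS]big_mkcond [leqRHS]big_mkcond; apply: leq_sum => k _.
  by case: ifP => // /hits_cut ->.
have splitD : D = (\sum_(j | jv j \in X) mum j + \sum_(j in J) mum j)%N.
  rewrite balanced (bigID (fun j => jv j \in X)) /=; congr (_ + _)%N.
  by apply: eq_bigl => j; rewrite inE.
have : (cut_base mup mum X <= cutcap K X)%N by apply: cut_base_le.
rewrite /cut_base; lia.
Qed.

Hypotheses (A_fin : forall i, exists j, Amat Ap Am i j != None) (fx : feasible Ap Am x).

Lemma tangent_descent_small_cut J : tfeas (chi J) -> tobj (chi J) < 0 ->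
  exists K X, [/\ in_frakG Ap Am x K, is_cut X & (cutcap K X < D)%N].
Proof.
move=> tfJ; rewrite tobj_chi_lt0 => hits_lt.
have /fin_all_exists[sel selP] : forall i, exists j, E3 Ap Am x j i &&
    ([exists j', E3 Ap Am x j' i && (j' \in J)] ==> (j \in J)).
  move=> i; case: (boolP [exists j, _]) => [/existsP[j /andP[E3j jJ]] | _].
    by exists j; rewrite E3j jJ.
  by have [j E3j] := E3_nonempty A_fin fx i; exists j; rewrite E3j.
pose K := [set e : 'I_n * 'I_m | e.1 == sel e.2].
pose X := [set v : vert | match v with
  | inl b => b
  | inr (inl (inl k)) => ~~ hits k J
  | inr (inl (inr j)) => j \notin J
  | inr (inr i) => sel i \notin J end].
have cX : is_cut X by rewrite /is_cut !inE.
exists K, X; split => //.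
  split=> [[j i]|i]; first by rewrite inE => /eqP /= ->; case/andP: (selP i).
  by apply/eqP/cards1P; exists (sel i); apply/setP => j; rewrite !inE.
have -> : cutcap K X = cut_base mup mum X.
  apply: cutcap_eq_base => // [k j|j i|i j]; rewrite !in_set /=.
  - move=> /negP no_hit /negPn jJ; apply/negP => E1kj.
    by apply: no_hit; apply/existsP; exists j; rewrite E1kj.
  - by move=> jJ /negPn selJ; apply: contraNneq jJ => ->.
  - move=> selJ /negPn jJ; apply/negP => /tfJ[j' E3j' /=].
    rewrite /chi jJ ler_nat lt0b => j'J.
    case/andP: (selP i) => _; rewrite (negbTE selJ) implybF => /existsP[].
    by exists j'; rewrite E3j' j'J.
rewrite /cut_base (eq_bigl (fun k => hits k J)) => [|k]; last by rewrite in_set negbK.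
rewrite (eq_bigl (fun j => j \notin J)) => [|j]; last by rewrite in_set.
by rewrite balanced [X in (_ < X)%N](bigID (fun j => j \in J)) ltn_add2r.
Qed.

End CutDirections.

Lemma exists_pos_lt_all (R : realType) (I : finType) (F : I -> R) :
  exists2 delta, 0 < delta & forall i, 0 < F i -> delta < F i.
Proof.
pose mu := \big[Num.min/1]_(i | 0 < F i) F i.
have mu_gt0 : 0 < mu by apply/bigmin_gtP.
exists (mu / 2) => [|i Fi]; first exact: divr_gt0.
have le_mu : mu <= F i by apply: bigmin_le_cond.
by apply: lt_le_trans le_mu; rewrite ltr_pdivrMr // ltr_pMr // ltr1n.
Qed.

Section GapBound.
Variables (R : realType) (m n p : nat).
Variables (Ap Am : 'I_m -> 'I_n -> option R) (C : 'I_p -> 'I_n -> option R).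
Variable x : 'I_n -> R.

Definition entry_gap (a : 'I_n -> option R) j1 j2 : R :=
  if (a j1, a j2) is (Some r1, Some r2) then `|(r1 + x j1) - (r2 + x j2)| else 0.

Lemma below_eps_exists : exists delta, below_eps Ap Am C x delta.
Proof.
pose F t := match t with
  | inl (i, j1, j2) => entry_gap (Amat Ap Am i) j1 j2
  | inr (k, j1, j2) => entry_gap (C k) j1 j2 end.
have [delta delta_gt0 ltF] := exists_pos_lt_all F.
exists delta; split => //; split=> [i|k] j1 j2 r1 r2 e1 e2.
  by have := ltF (inl (i, j1, j2)); rewrite /F /entry_gap /= e1 e2.
by have := ltF (inr (k, j1, j2)); rewrite /F /entry_gap /= e1 e2.
Qed.

Lemma below_eps_le d0 d : below_eps Ap Am C x d0 -> 0 < d -> d <= d0 ->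
  below_eps Ap Am C x d.
Proof.
move=> [_ [gA gC]] d_gt0 le_d; split=> //; split=> [i|k] j1 j2 r1 r2 e1 e2 pos.
  exact: le_lt_trans le_d (gA _ _ _ _ _ e1 e2 pos).
exact: le_lt_trans le_d (gC _ _ _ _ _ e1 e2 pos).
Qed.

End GapBound.

Section LocalOptimality.
Variables (R : realType) (m n p : nat).
Variables (Ap Am : 'I_m -> 'I_n -> option R) (C : 'I_p -> 'I_n -> option R).
Variables (mup : 'I_p -> nat) (mum : 'I_n -> nat) (x : 'I_n -> R).
Hypotheses (A_fin : forall i, exists j, Amat Ap Am i j != None).
Hypotheses (C_fin : forall k, exists j, C k j != None).
Hypotheses (balanced : Dtot mup = (\sum_j mum j)%N) (fx : feasible Ap Am x).

Local Notation D := (Dtot mup).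
Local Notation cutcap := (cutcap Ap Am C mup mum x).
Local Notation fobj := (fobj C mup mum).

Lemma E1_nonempty k : exists j, E1 C x k j.
Proof. by have [M CM] := rowmax_fin x (C_fin k); apply: rowarg_nonempty CM. Qed.

Lemma weights_balancedR : \sum_k (mup k)%:R = \sum_j (mum j)%:R :> R.
Proof. by rewrite -!natr_sum -balanced. Qed.

Lemma small_cut_descent K X delta :
  in_frakG Ap Am x K -> is_cut X -> (cutcap K X < D)%N -> below_eps Ap Am C x delta ->
  feasible Ap Am (shift x (Jof X) delta) /\ fobj (shift x (Jof X) delta) < fobj x.
Proof.
move=> fK cX small gap.
have [tfJ objJ] := small_cut_tangent_descent balanced E1_nonempty fK cX small.
have delta_gt0 : 0 < delta by case: gap.
set J := Jof X; set y := shift x J delta.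
have dev_y j : y j - x j = delta * chi J j.
  by rewrite /y /shift /chi addrAC subrr add0r; case: (j \in J); rewrite ?mulr1 ?mulr0.
have osc j1 j2 : (y j1 - x j1) - (y j2 - x j2) <= delta.
  by rewrite !dev_y /chi; case: (j1 \in J); case: (j2 \in J); rewrite ?mulr1 ?mulr0; lra.
split.
  apply: (feasible_local A_fin gap osc); apply: tangent_feasible_mono tfJ => j j' le_jj'.
  by rewrite !dev_y ler_wpM2l // ltW.
rewrite (fobj_local mup mum C_fin gap osc) (eq_tangent_obj _ _ _ dev_y).
rewrite tangent_objZ ?ltW //.
  by rewrite gtrDl pmulr_rlt0.
exact: E1_nonempty.
Qed.

Lemma local_optimum_no_small_cut K X : local_optimum Ap Am C mup mum x ->
  in_frakG Ap Am x K -> is_cut X -> ~ (cutcap K X < D)%N.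
Proof.
move=> [_ [dL [dL_gt0 optL]]] fK cX small.
have [d0 gap0] := below_eps_exists Ap Am C x.
have d0_gt0 : 0 < d0 by case: gap0.
pose delta := Num.min d0 (dL / 2).
have delta_gt0 : 0 < delta by rewrite lt_min d0_gt0 divr_gt0.
have gap : below_eps Ap Am C x delta by apply: below_eps_le gap0 _ _; rewrite ?ge_min ?lexx.
have [fy lt_obj] := small_cut_descent fK cX small gap.
suff close j : `|x j - shift x (Jof X) delta j| < dL.
  by move: (optL _ fy close); rewrite leNgt lt_obj.
have : delta <= dL / 2 by rewrite ge_min lexx orbT.
rewrite /shift; case: (j \in _); rewrite ?addr0 ?subrr ?normr0 //.
by rewrite opprD addNKr normrN gtr0_norm //; lra.
Qed.

Lemma not_local_optimum_small_cut : ~ local_optimum Ap Am C mup mum x ->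
  exists K X, [/\ in_frakG Ap Am x K, is_cut X & (cutcap K X < D)%N].
Proof.
move=> not_opt; have [d0 gap0] := below_eps_exists Ap Am C x.
have d0_gt0 : 0 < d0 by case: gap0.
have [y [fy close lt_obj]] : exists y, [/\ feasible Ap Am y,
    forall j, `|x j - y j| < d0 / 2 & fobj y < fobj x].
  apply: contrapT => none; apply: not_opt; split=> //; exists (d0 / 2).
  split=> [|y fy close]; first exact: divr_gt0.
  by rewrite leNgt; apply/negP => lt_obj; apply: none; exists y.
have osc j1 j2 : (y j1 - x j1) - (y j2 - x j2) <= d0.
  by have := close j1; have := close j2; rewrite !ltr_distl; lra.
have tf := tangent_feasible_local A_fin gap0 osc fy.
have obj : tangent_obj (E1 C x) (fun k => (mup k)%:R) (fun j => (mum j)%:R)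
    (fun j => y j - x j) < 0.
  by move: lt_obj; rewrite (fobj_local mup mum C_fin gap0 osc); lra.
have [J [tfJ objJ]] := tangent_descent_indicator E1_nonempty weights_balancedR tf obj.
exact: (tangent_descent_small_cut balanced E1_nonempty A_fin fx tfJ objJ).
Qed.

End LocalOptimality.

Theorem theorem1p2 (R : realType) (m n p : nat)
  (Ap Am : 'I_m -> 'I_n -> option R) (C : 'I_p -> 'I_n -> option R)
  (mup : 'I_p -> nat) (mum : 'I_n -> nat) (x : 'I_n -> R) :
  standing_assumptions Ap Am C mup mum ->
  feasible Ap Am x ->
  (local_optimum Ap Am C mup mum x <->
     (forall K : {set 'I_n * 'I_m}, in_frakG Ap Am x K ->
        mincut Ap Am C mup mum x K = Dtot mup)) /\
  (~ local_optimum Ap Am C mup mum x ->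
     exists K : {set 'I_n * 'I_m}, in_frakG Ap Am x K /\
     exists X : {set vert m n p},
       is_min_cut Ap Am C mup mum x K X /\
       (cutcap Ap Am C mup mum x K X < Dtot mup)%N /\
       forall delta : R, below_eps Ap Am C x delta ->
         feasible Ap Am (shift x (Jof X) delta) /\
         fobj C mup mum (shift x (Jof X) delta) < fobj C mup mum x).
Proof.
move=> [A_fin [C_fin [balanced _]]] fx.
have no_small_cut := local_optimum_no_small_cut A_fin C_fin balanced.
have small_cut := not_local_optimum_small_cut A_fin C_fin balanced fx.
have descent := small_cut_descent A_fin C_fin balanced.
split; first split.
- move=> opt K fK; have [X0 [cX0 minX0] ->] := mincutP Ap Am C mup mum x K.
  apply/eqP; rewrite eqn_leq -{1}(cutcap_source Ap Am C mup mum x K) minX0 ?is_cut_s //=.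
  by rewrite leqNgt; apply/negP; apply: no_small_cut.
- move=> mincutD; apply: contrapT => /small_cut[K [X [fK cX small]]].
  have [X0 [_ minX0] eX0] := mincutP Ap Am C mup mum x K.
  by have := minX0 _ cX; rewrite -eX0 mincutD // leqNgt small.
move=> /small_cut[K [X [fK cX small]]]; exists K; split=> //.
have [X0 [cX0 minX0] _] := mincutP Ap Am C mup mum x K.
have small0 := leq_ltn_trans (minX0 _ cX) small.
by exists X0; do 2!split=> //; move=> delta; apply: descent fK cX0 small0.
Qed.
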